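(* Consider the reaction network (BIII) on the fourteen species $\mathrm{NE}_i,\mathrm{NI}_i,\mathrm{N}_i,\mathrm{D}_{si},\mathrm{D}_i,\mathrm{T}_i,\mathrm{B}_i$ ($i=1,2$) with irreversible reactions \[ \begin{aligned} &11:\ \mathrm{NI}_1+\mathrm{NE}_1\to\mathrm{N}_1, && 21:\ \mathrm{NI}_2+\mathrm{NE}_2\to\mathrm{N}_2,\\ &12:\ \mathrm{N}_1+\mathrm{D}_2\to\mathrm{NI}_1+\mathrm{T}_2, && 22:\ \mathrm{N}_2+\mathrm{D}_1\to\mathrm{NI}_2+\mathrm{T}_1,\\ &16:\ \mathrm{N}_1+\mathrm{D}_{s2}\to\mathrm{B}_2, && 26:\ \mathrm{N}_2+\mathrm{D}_{s1}\to\mathrm{B}_1,\\ &17:\ \mathrm{B}_2\to\mathrm{N}_1+\mathrm{D}_{s2}, && 27:\ \mathrm{B}_1\to\mathrm{N}_2+\mathrm{D}_{s1},\\ &18:\ \mathrm{D}_{s1}\to\mathrm{D}_1, && 28:\ \mathrm{D}_{s2}\to\mathrm{D}_2,\\ &19:\ \mathrm{T}_1\to\mathrm{NE}_1+\mathrm{D}_{s1}, && 29:\ \mathrm{T}_2\to\mathrm{NE}_2+\mathrm{D}_{s2}, \end{aligned} \] and the associated ODE system \[ \begin{cases} [\dot{\mathrm{NE}}_1]=-r_{11}([\mathrm{NI}_1],[\mathrm{NE}_1])+r_{19}([\mathrm{T}_1]),\\ [\dot{\mathrm{NI}}_1]=r_{12}([\mathrm{N}_1],[\mathrm{D}_2])-r_{11}([\mathrm{NI}_1],[\mathrm{NE}_1]),\\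 [\dot{\mathrm{N}}_1]=-r_{12}([\mathrm{N}_1],[\mathrm{D}_2])+r_{11}([\mathrm{NI}_1],[\mathrm{NE}_1])-r_{16}([\mathrm{N}_1],[\mathrm{D}_{s2}])+r_{17}([\mathrm{B}_2]),\\ [\dot{\mathrm{D}}_{s1}]=r_{19}([\mathrm{T}_1])-r_{26}([\mathrm{N}_2],[\mathrm{D}_{s1}])+r_{27}([\mathrm{B}_1])-r_{18}([\mathrm{D}_{s1}]),\\ [\dot{\mathrm{D}}_1]=r_{18}([\mathrm{D}_{s1}])-r_{22}([\mathrm{N}_2],[\mathrm{D}_1]),\\ [\dot{\mathrm{T}}_1]=-r_{19}([\mathrm{T}_1])+r_{22}([\mathrm{N}_2],[\mathrm{D}_1]),\\ [\dot{\mathrm{B}}_1]=r_{26}([\mathrm{N}_2],[\mathrm{D}_{s1}])-r_{27}([\mathrm{B}_1]),\\ [\dot{\mathrm{NE}}_2]=-r_{21}([\mathrm{NI}_2],[\mathrm{NE}_2])+r_{29}([\mathrm{T}_2]),\\ [\dot{\mathrm{NI}}_2]=r_{22}([\mathrm{N}_2],[\mathrm{D}_1])-r_{21}([\mathrm{NI}_2],[\mathrm{NE}_2]),\\ [\dot{\mathrm{N}}_2]=-r_{26}([\mathrm{N}_2],[\mathrm{D}_{s1}])+r_{27}([\mathrm{B}_1])-r_{22}([\mathrm{N}_2],[\mathrm{D}_1])+r_{21}([\mathrm{NI}_2],[\mathrm{NE}_2]),\\ [\dot{\mathrm{D}}_{s2}]=r_{29}([\mathrm{T}_2])-r_{16}([\mathrm{N}_1],[\mathrm{D}_{s2}])+r_{17}([\mathrm{B}_2])-r_{28}([\mathrm{D}_{s2}]),\\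 [\dot{\mathrm{D}}_2]=-r_{12}([\mathrm{N}_1],[\mathrm{D}_2])+r_{28}([\mathrm{D}_{s2}]),\\ [\dot{\mathrm{T}}_2]=r_{12}([\mathrm{N}_1],[\mathrm{D}_2])-r_{29}([\mathrm{T}_2]),\\ [\dot{\mathrm{B}}_2]=r_{16}([\mathrm{N}_1],[\mathrm{D}_{s2}])-r_{17}([\mathrm{B}_2]), \end{cases} \] with the kinetic symmetry constraints $r_{1k}\equiv r_{2k}$ for $k=1,2,6,7,8,9$. Then the system has the capacity for zero-eigenvalue bifurcations and thus for differentiation. Moreover, up to the symmetry swapping the cell indices $1\leftrightarrow2$, there is exactly one instability motif associated to an unstable-positive feedback, namely, for $(j,k)=(1,2)$ and $(j,k)=(2,1)$, the subnetwork with species $\{\mathrm{N}_j,\mathrm{D}_{sk},\mathrm{D}_k,\mathrm{T}_k\}$ and reactions $\{j2,\ j6,\ k8,\ k9\}$ (i.e. $\mathrm{N}_j+\mathrm{D}_k\to\mathrm{T}_k+\dots$, $\mathrm{N}_j+\mathrm{D}_{sk}\to\dots$, $\mathrm{D}_{sk}\to\mathrm{D}_k$, $\mathrm{T}_k\to\mathrm{D}_{sk}+\dots$). This motif identifies non-autocatalytic positive feedback, and the network (BIII) is non-autocatalytic.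
   Context: General setting. A reaction network has species $X_1,\dots,X_M$ and irreversible reactions $j:\ \sum_m s^j_m X_m\to\sum_m \tilde s^j_m X_m$ with nonnegative stoichiometric coefficients; $X_m$ is a reactant of $j$ if $s^j_m>0$. The stoichiometric matrix is $S_{mj}=\tilde s^j_m-s^j_m$; the ODE system is $\dot x=S\mathbf r(x)$ with rates $r_j$ that are monotone chemical: (i) $r_j\ge0$ on $\mathbb R^M_{\ge0}$; (ii) $r_j(x)>0$ iff $x_m>0$ for all reactants $X_m$ of $j$; (iii) $\partial r_j/\partial x_m\equiv0$ if $X_m$ is not a reactant of $j$; (iv) $\partial r_j/\partial x_m>0$ for $x>0$ and $X_m$ a reactant of $j$. Kinetics are assumed parameter-rich: at any positive steady state the partial derivatives $\partial r_j/\partial x_m$ (for reactants) can be prescribed as arbitrary positive numbers. Symbolic analysis: $R$ is the symbolic reactivity matrix ($R_{jm}=r_{jm}>0$ a symbol if $X_m$ is a reactant of $j$, else $0$), $G=SR$ the symbolic Jacobian, $n=\dim\ker S^T$, and $a_{M-n}$ the sum of the principal minors of order $M-n$ of $G$ (for a nondegenerate network, the determinant of the Jacobian restricted to a stoichiometric compatibility class $(x_0+\operatorname{Im}S)\cap\mathbb R^M_{>0}$). The network has the capacity for zero-eigenvalue bifurcation (differentiation) if there exist positive symbol values with $a_{M-n}=0$ satisfying kinetic symmetry at a homogeneous steady state, i.e. $r_{jm}=r_{\sigma(j)\sigma(m)}$ where $\sigma$ swaps cell indices $1\leftrightarrow2$ of reactions and species. A $k$-Child-Selection (CS) triple $(\kappa,E_\kappa,J)$: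 $k$ species $\kappa$, $k$ reactions $E_\kappa$, bijection $J:\kappa\to E_\kappa$ with each $X_m\in\kappa$ a reactant of $J(X_m)$; its CS-matrix is $S[\kappa]_{ml}=S_{m,J(X_l)}$, $X_m,X_l\in\kappa$. An unstable-positive feedback is a $k\times k$ CS-matrix with $\operatorname{sign}\det S[\kappa]=(-1)^{k-1}$ such that no principal $k'\times k'$ submatrix, $k'<k$, has determinant of sign $(-1)^{k'-1}$. Its instability motif is the subnetwork with species $\kappa$ and reactions $E_\kappa$ (other species are disregarded). An unstable-positive feedback is autocatalytic if it is a Metzler matrix (nonnegative off-diagonal entries); a network is autocatalytic if it has an autocatalytic unstable-positive feedback, non-autocatalytic otherwise. *)

From HB Require Import structures.
From mathcomp Require Import all_boot all_order all_algebra.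
From mathcomp Require Import reals.
Set Implicit Arguments.
Unset Strict Implicit.
Unset Printing Implicit Defensive.
Import Order.TTheory GRing.Theory Num.Theory.
Local Open Scope ring_scope.

Definition NE1 := 0%N.  Definition NI1 := 1%N.  Definition N1 := 2%N.
Definition Ds1 := 3%N.  Definition D1 := 4%N.   Definition T1 := 5%N.
Definition B1 := 6%N.
Definition NE2 := 7%N.  Definition NI2 := 8%N.  Definition N2 := 9%N.
Definition Ds2 := 10%N. Definition D2 := 11%N.  Definition T2 := 12%N.
Definition B2 := 13%N.

Definition R11 := 0%N. Definition R12 := 1%N. Definition R16 := 2%N.
Definition R17 := 3%N. Definition R18 := 4%N. Definition R19 := 5%N.
Definition R21 := 6%N. Definition R22 := 7%N. Definition R26 := 8%N.
Definition R27 := 9%N. Definition R28 := 10%N. Definition R29 := 11%N.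

Definition lhs_list : seq (seq nat) :=
  [:: [:: NI1; NE1]   (* 11: NI1 + NE1 -> N1 *)
    ; [:: N1; D2]     (* 12: N1 + D2 -> NI1 + T2 *)
    ; [:: N1; Ds2]    (* 16: N1 + Ds2 -> B2 *)
    ; [:: B2]         (* 17: B2 -> N1 + Ds2 *)
    ; [:: Ds1]        (* 18: Ds1 -> D1 *)
    ; [:: T1]         (* 19: T1 -> NE1 + Ds1 *)
    ; [:: NI2; NE2]   (* 21: NI2 + NE2 -> N2 *)
    ; [:: N2; D1]     (* 22: N2 + D1 -> NI2 + T1 *)
    ; [:: N2; Ds1]    (* 26: N2 + Ds1 -> B1 *)
    ; [:: B1]         (* 27: B1 -> N2 + Ds1 *)
    ; [:: Ds2]        (* 28: Ds2 -> D2 *)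
    ; [:: T2]         (* 29: T2 -> NE2 + Ds2 *) ].

Definition rhs_list : seq (seq nat) :=
  [:: [:: N1]
    ; [:: NI1; T2]
    ; [:: B2]
    ; [:: N1; Ds2]
    ; [:: D1]
    ; [:: NE1; Ds1]
    ; [:: N2]
    ; [:: NI2; T1]
    ; [:: B1]
    ; [:: N2; Ds1]
    ; [:: D2]
    ; [:: NE2; Ds2] ].

Definition nS := 14%N.
Definition nR := 12%N.

Definition s_coef (j : 'I_nR) (m : 'I_nS) : nat :=
  count_mem (m : nat) (nth [::] lhs_list j).
Definition st_coef (j : 'I_nR) (m : 'I_nS) : nat :=
  count_mem (m : nat) (nth [::] rhs_list j).

Definition is_reactant (j : 'I_nR) (m : 'I_nS) : bool := (0 < s_coef j m)%N.

Definition Smx : 'M[int]_(nS, nR) :=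
  \matrix_(m < nS, j < nR) ((st_coef j m)%:Z - (s_coef j m)%:Z).

(* the cell swap sigma : 1 <-> 2 on species and reactions *)
Definition sig_sp (m : 'I_nS) : 'I_nS := inord ((m + 7) %% 14).
Definition sig_re (j : 'I_nR) : 'I_nR := inord ((j + 6) %% 12).

Definition psubmx (T : Type) (k : nat) (A : 'M[T]_k) (I : {set 'I_k})
  : 'M[T]_#|I| :=
  \matrix_(i < #|I|, l < #|I|) A (enum_val i) (enum_val l).

Definition pminor_sum (R : comRingType) (k p : nat) (A : 'M[R]_k) : R :=
  \sum_(I : {set 'I_k} | #|I| == p) \det (psubmx A I).

Section Symbolic.
Variable R : realType.

Definition S_R : 'M[R]_(nS, nR) := map_mx (fun z : int => z%:~R) Smx.

Definition reactivity (r : 'I_nR -> 'I_nS -> R) : 'M[R]_(nR, nS) :=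
  \matrix_(j < nR, m < nS) (if is_reactant j m then r j m else 0).

Definition Gmx (r : 'I_nR -> 'I_nS -> R) : 'M[R]_nS := S_R *m reactivity r.

(* n = dim ker S^T (the left kernel of S) *)
Definition n_cons : nat := \rank (kermx S_R).

Definition zero_eig_capacity : Prop :=
  exists r : 'I_nR -> 'I_nS -> R,
    [/\ (forall j m, is_reactant j m -> 0 < r j m),
        (forall j m, is_reactant j m -> r j m = r (sig_re j) (sig_sp m)) &
        pminor_sum (nS - n_cons) (Gmx r) = 0].
End Symbolic.

Definition CS_triple (kap : {set 'I_nS}) (J : 'I_nS -> 'I_nR) : Prop :=
  {in kap &, injective J} /\ (forall m, m \in kap -> is_reactant (J m) m).

Definition CSmx (kap : {set 'I_nS}) (J : 'I_nS -> 'I_nR) : 'M[int]_#|kap| :=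
  \matrix_(i < #|kap|, l < #|kap|) Smx (enum_val i) (J (enum_val l)).

Definition sign_alt (k : nat) (d : int) : bool := 0 < (-1) ^+ k.-1 * d.

Definition unstable_positive_feedback (kap : {set 'I_nS}) (J : 'I_nS -> 'I_nR)
  : Prop :=
  [/\ CS_triple kap J, (0 < #|kap|)%N,
      sign_alt #|kap| (\det (CSmx kap J)) &
      forall I : {set 'I_#|kap|}, (0 < #|I| < #|kap|)%N ->
        ~~ sign_alt #|I| (\det (psubmx (CSmx kap J) I))].

Definition motif (kap : {set 'I_nS}) (J : 'I_nS -> 'I_nR)
  : {set 'I_nS} * {set 'I_nR} := (kap, J @: kap).

Definition Metzler (k : nat) (A : 'M[int]_k) : Prop :=
  forall i l, i != l -> 0 <= A i l.

Definition autocatalytic_UPF (kap : {set 'I_nS}) (J : 'I_nS -> 'I_nR) : Prop :=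
  unstable_positive_feedback kap J /\ Metzler (CSmx kap J).

Definition non_autocatalytic_network : Prop :=
  ~ exists kap J, autocatalytic_UPF kap J.

Definition spset (l : seq nat) : {set 'I_nS} := [set m : 'I_nS | (m : nat) \in l].
Definition reset (l : seq nat) : {set 'I_nR} := [set j : 'I_nR | (j : nat) \in l].

Definition motif12 : {set 'I_nS} * {set 'I_nR} :=
  (spset [:: N1; Ds2; D2; T2], reset [:: R12; R16; R28; R29]).
Definition motif21 : {set 'I_nS} * {set 'I_nR} :=
  (spset [:: N2; Ds1; D1; T1], reset [:: R22; R26; R18; R19]).

From HB Require Import structures.
From mathcomp Require Import all_boot all_order all_algebra.
From mathcomp Require Import reals.
Set Implicit Arguments. Unset Strict Implicit. Unset Printing Implicit Defensive.
Import Order.TTheory GRing.Theory Num.Theory.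
Local Open Scope ring_scope.

(* Everything reduces to finite computations with the 14 x 12 stoichiometric
   matrix S.  A 9 x 9 minor of S equals 1 and five independent conservation
   laws (intracellular Notch and Delta of each cell, and the total
   extracellular Notch) annihilate S, so rank S = 9 and n = 5; with every
   symbol equal to 1 (trivially kinetically symmetric) the sum of the 9 x 9
   principal minors of the Jacobian vanishes.  Unstable-positive
   feedbacks are classified by enumerating all CS-triples: each one whose
   determinant has sign (-1)^(k-1) is one of the two 4-species motifs or
   properly contains one, which minimality forbids.  In both motifs N_j is
   consumed by reaction j2, a negative off-diagonal entry, so neither is Metzler. *)

(** * Determinants and principal minors by computation *)

Section LaplaceDet.
Variable R : comPzRingType.

(* Unlike the locked [\sum], this sum reduces under [vm_compute]. *)
Definition nsum (n : nat) (F : nat -> R) : R :=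
  foldr (fun i acc => F i + acc) 0 (iota 0 n).

Lemma nsumE n F : nsum n F = \sum_(i < n) F i.
Proof.
rewrite /nsum -(big_mkord xpredT F) /index_iota subn0.
by elim: (iota 0 n) => [|i s /= ->]; rewrite ?big_nil ?big_cons.
Qed.

Definition drop_nth (j : nat) (s : seq nat) := take j s ++ drop j.+1 s.

Lemma size_drop_nth j s : (j < size s)%N -> size (drop_nth j s) = (size s).-1.
Proof.
move=> lt_js; rewrite size_cat size_take size_drop lt_js.
by case: (size s) lt_js => // n; rewrite ltnS => le_jn; rewrite subSS subnKC.
Qed.

Lemma nth_drop_nth j s k : (j < size s)%N ->
  nth 0%N (drop_nth j s) k = nth 0%N s (bump j k).
Proof.
move=> lt_js; rewrite nth_cat size_take lt_js /bump.
by case: ltnP => [lt_kj|le_jk]; rewrite ?nth_take // nth_drop addSn subnKC.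
Qed.

(* Skipping zero entries keeps the expansion of the sparse matrices below cheap. *)
Fixpoint laplace_det (f : nat -> nat -> R) (rows cols : seq nat) : R :=
  if rows is r :: rs then
    nsum (size cols) (fun j => let a := f r (nth 0%N cols j) in
      if a == 0 then 0 else (-1) ^+ j * a * laplace_det f rs (drop_nth j cols))
  else 1.

Lemma det_laplace n (A : 'M[R]_n) f rows cols :
  size rows = n -> size cols = n ->
  (forall i j : 'I_n, A i j = f (nth 0%N rows i) (nth 0%N cols j)) ->
  \det A = laplace_det f rows cols.
Proof.
elim: n A rows cols => [|n IH] A [|r rs] cols //=; first by rewrite det_mx00.
move=> [size_rs] size_cols AE; rewrite (expand_det_row _ ord0) size_cols nsumE.
apply: eq_bigr => j _; rewrite AE /=; case: eqP => [->|_]; first by rewrite mul0r.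
have lt_j : (j < size cols)%N by rewrite size_cols.
rewrite /cofactor add0n mulrA [_ * (-1) ^+ _]mulrC (IH _ rs (drop_nth j cols)) //.
  by rewrite size_drop_nth size_cols.
by move=> i k; rewrite !mxE AE lift0 /= nth_drop_nth.
Qed.

End LaplaceDet.

Lemma mulmx_nsum (R : comPzRingType) m n p (A : 'M[R]_(m, n)) (B : 'M[R]_(n, p))
    (f g : nat -> nat -> R) :
  (forall i j, A i j = f i j) -> (forall j k, B j k = g j k) ->
  forall i k, (A *m B) i k = nsum n (fun j => f i j * g j k).
Proof.
move=> AE BE i k; rewrite mxE nsumE.
by apply: eq_bigr => j _; rewrite AE BE.
Qed.

Lemma all_iota_ord n (P : nat -> bool) : all P (iota 0 n) -> forall i : 'I_n, P i.
Proof. by move/allP => P_all i; apply: P_all; rewrite mem_iota ltn_ord. Qed.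

Definition table (T : Type) m n (f : nat -> nat -> T) : seq (seq T) :=
  [seq [seq f i j | j <- iota 0 n] | i <- iota 0 m].

Lemma nth_table (T : Type) (x0 : T) m n f i j : (i < m)%N -> (j < n)%N ->
  nth x0 (nth [::] (table m n f) i) j = f i j.
Proof.
by move=> lt_im lt_jn; rewrite (nth_map 0%N) ?(nth_map 0%N) ?size_iota // !nth_iota.
Qed.

Definition set_mask n (I : {set 'I_n}) : bitseq := [seq i \in I | i <- enum 'I_n].

Fixpoint bitseqs (n : nat) : seq bitseq :=
  if n is n'.+1 then [seq true :: m | m <- bitseqs n'] ++ [seq false :: m | m <- bitseqs n']
  else [:: [::]].

Section SetMasks.
Variable n : nat.
Implicit Type I : {set 'I_n}.

Lemma size_set_mask I : size (set_mask I) = n.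
Proof. by rewrite size_map size_enum_ord. Qed.

Lemma nth_set_mask I (i : 'I_n) : nth false (set_mask I) i = (i \in I).
Proof. by rewrite (nth_map i) ?size_enum_ord // nth_ord_enum. Qed.

Lemma enum_set_mask I : map val (enum I) = mask (set_mask I) (iota 0 n).
Proof.
rewrite /enum_mem -enumT filter_mask map_mask val_enum_ord.
by congr mask; apply: eq_map.
Qed.

Lemma card_set_mask I : #|I| = count id (set_mask I).
Proof.
by rewrite cardE -(size_map val) enum_set_mask size_mask ?size_set_mask ?size_iota.
Qed.

Lemma set_mask_inj : injective (@set_mask n).
Proof. by move=> I1 I2 eqI; apply/setP => i; rewrite -!nth_set_mask eqI. Qed.

Lemma set_maskP (m : bitseq) : size m = n -> {I : {set 'I_n} | set_mask I = m}.
Proof.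
move=> size_m; exists [set i : 'I_n | nth false m i].
rewrite /set_mask (eq_map (g := nth false m \o val)) => [|i]; last by rewrite /= inE.
by rewrite map_comp val_enum_ord -size_m -/(mkseq _ _) mkseq_nth.
Qed.

Lemma nth_mask_set_mask I (s : seq nat) (i : 'I_#|I|) : size s = n ->
  nth 0%N (mask (set_mask I) s) i = nth 0%N s (enum_val i).
Proof.
move=> size_s; have -> : mask (set_mask I) s = map (nth 0%N s) (map val (enum I)).
  have mkseq_s : mkseq (nth 0%N s) n = s by rewrite -size_s mkseq_nth.
  by rewrite enum_set_mask map_mask -/(mkseq _ _) mkseq_s.
rewrite (nth_map 0%N) ?size_map -?cardE //.
by rewrite (nth_map (enum_val i)) -?cardE // -enum_val_nth.
Qed.

End SetMasks.

Lemma mem_bitseqs n m : (m \in bitseqs n) = (size m == n).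
Proof.
elim: n m => [|n IH] [|b m] //=; rewrite mem_cat.
  by apply/norP; split; apply/mapP => -[].
have cons_inj (c : bool) : injective (cons c) by move=> ? ? [].
by case: b; rewrite (mem_map (cons_inj _)) IH;
  [apply/orb_idr | apply/orb_idl] => /mapP [].
Qed.

Lemma uniq_bitseqs n : uniq (bitseqs n).
Proof.
elim: n => //= n IH; have cons_inj (c : bool) : injective (cons c) by move=> ? ? [].
rewrite cat_uniq !(map_inj_uniq (cons_inj _)) IH /= andbT.
by apply/hasPn => _ /mapP [m _ ->]; apply/mapP => -[].
Qed.

Lemma big_set_mask (M : nmodType) n (F : bitseq -> M) :
  \sum_(I : {set 'I_n}) F (set_mask I) = \sum_(m <- bitseqs n) F m.
Proof.
rewrite -big_enum -(big_map (@set_mask n) xpredT F) /=.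
apply/perm_big/uniq_perm.
- by rewrite (map_inj_uniq (@set_mask_inj n)) enum_uniq.
- exact: uniq_bitseqs.
- move=> m; rewrite mem_bitseqs; apply/mapP/eqP => [[I _ ->]|/set_maskP [I <-]].
    exact: size_set_mask.
  by exists I; rewrite ?mem_enum.
Qed.

Section PrincipalMinors.
Variables (R : comNzRingType) (n : nat) (A : 'M[R]_n) (f : nat -> nat -> R).
Variables (rows cols : seq nat).
Hypotheses (size_rows : size rows = n) (size_cols : size cols = n).
Hypothesis AE : forall i j : 'I_n, A i j = f (nth 0%N rows i) (nth 0%N cols j).

Lemma det_psubmx_laplace (I : {set 'I_n}) :
  \det (psubmx A I) = laplace_det f (mask (set_mask I) rows) (mask (set_mask I) cols).
Proof.
apply: det_laplace; rewrite ?size_mask ?size_set_mask -?card_set_mask //.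
by move=> i j; rewrite mxE AE !nth_mask_set_mask.
Qed.

Lemma pminor_sum_laplace p :
  pminor_sum p A = \sum_(m <- bitseqs n)
     (if count id m == p then laplace_det f (mask m rows) (mask m cols) else 0).
Proof.
rewrite /pminor_sum big_mkcond -big_set_mask.
by apply: eq_bigr => I _; rewrite det_psubmx_laplace card_set_mask.
Qed.

End PrincipalMinors.

Lemma pminor_sum_map (R S : comNzRingType) (f : {rmorphism R -> S}) n p (A : 'M[R]_n) :
  pminor_sum p (map_mx f A) = f (pminor_sum p A).
Proof.
rewrite /pminor_sum rmorph_sum; apply: eq_bigr => I _; rewrite -det_map_mx.
by congr (\det _); apply/matrixP => i j; rewrite !mxE.
Qed.

Lemma uniq_map_inj_in (T1 T2 : eqType) (f : T1 -> T2) (s : seq T1) :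
  uniq (map f s) -> {in s &, injective f}.
Proof.
elim: s => //= x s IH /andP [fx_notin /IH inj_s] y z.
rewrite !inE => /predU1P [-> | ys] /predU1P [-> | zs] // eq_f.
- by move: fx_notin; rewrite eq_f map_f.
- by move: fx_notin; rewrite -eq_f map_f.
- exact: inj_s.
Qed.

Lemma rank_ge_minor (F : fieldType) m n k (A : 'M[F]_(m, n))
    (f : 'I_k -> 'I_m) (g : 'I_k -> 'I_n) :
  \det (mxsub f g A) != 0 -> (k <= \rank A)%N.
Proof.
move=> det_neq0; rewrite -[k](mxrank_unit (A := mxsub f g A)) ?unitmxE ?unitfE //.
have -> : mxsub f g A = rowsub f 1%:M *m A *m colsub g 1%:M.
  by rewrite -mulmxA mulmx_colsub mulmx1 -mxsub_mul mul1mx.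
exact: leq_trans (mxrankM_maxl _ _) (mxrankM_maxr _ _).
Qed.

Lemma rank_ge_int_minor (F : numFieldType) m n (A : 'M[int]_(m.+1, n.+1))
    (h : nat -> nat -> int) (rows cols : seq nat) :
  (forall i j, A i j = h i j) -> size rows = size cols ->
  all (fun i => i <= m)%N rows -> all (fun j => j <= n)%N cols ->
  laplace_det h rows cols != 0 ->
  (size rows <= \rank (map_mx (fun z : int => z%:~R : F) A))%N.
Proof.
move=> AE size_cols rows_le cols_le det_neq0.
pose f (i : 'I_(size rows)) : 'I_m.+1 := inord (nth 0%N rows i).
pose g (j : 'I_(size rows)) : 'I_n.+1 := inord (nth 0%N cols j).
apply: (rank_ge_minor (f := f) (g := g)); rewrite -map_mxsub det_map_mx intr_eq0.
rewrite (det_laplace (f := h) (rows := rows) (cols := cols)) // => i j.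
rewrite mxE AE !inordK //; first by apply: (allP cols_le); rewrite mem_nth -?size_cols.
by apply: (allP rows_le); rewrite mem_nth.
Qed.

(** * Unstable-positive feedbacks of (BIII) *)

Definition stoich (m j : nat) : int :=
  (count_mem m (nth [::] rhs_list j))%:Z - (count_mem m (nth [::] lhs_list j))%:Z.

Lemma SmxE (m : 'I_nS) (j : 'I_nR) : Smx m j = stoich m j.
Proof. by rewrite mxE. Qed.

Definition reactant (j m : nat) : bool := (0 < count_mem m (nth [::] lhs_list j))%N.

Lemma reactant_lt j m : reactant j m -> (j < nR)%N.
Proof. by rewrite ltnNge; apply: contraL => le_nj; rewrite /reactant nth_default. Qed.

Definition cs_species (kap : {set 'I_nS}) : seq nat := map val (enum kap).

Definition cs_reactions (kap : {set 'I_nS}) (J : 'I_nS -> 'I_nR) : seq nat :=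
  map (fun m => val (J m)) (enum kap).

Definition unstable_sign (ks js : seq nat) : bool :=
  sign_alt (size ks) (laplace_det stoich ks js).

Definition minimal_unstable (ks js : seq nat) : bool :=
  [&& (0 < size ks)%N, unstable_sign ks js &
      all (fun w => (0 < count id w < size ks)%N ==> ~~ unstable_sign (mask w ks) (mask w js))
          (bitseqs (size ks))].

Section CSLists.
Variables (kap : {set 'I_nS}) (J : 'I_nS -> 'I_nR).
Local Notation ks := (cs_species kap).
Local Notation js := (cs_reactions kap J).

Lemma size_cs_species : size ks = #|kap|.
Proof. by rewrite size_map cardE. Qed.

Lemma size_cs_reactions : size js = #|kap|.
Proof. by rewrite size_map cardE. Qed.

Lemma CSmx_entry (i l : 'I_#|kap|) :
  CSmx kap J i l = stoich (nth 0%N ks i) (nth 0%N js l).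
Proof.
rewrite !mxE (nth_map (enum_val i)) ?(nth_map (enum_val l)) -?cardE //.
by rewrite -!enum_val_nth.
Qed.

Lemma CS_tripleE :
  CS_triple kap J <-> uniq js /\ all2 (fun m j => reactant j m) ks js.
Proof.
rewrite all2E size_cs_species size_cs_reactions eqxx zip_map all_map /=.
split=> [[J_inj J_re] | [js_uniq /allP J_re]]; split.
- rewrite map_inj_in_uniq ?enum_uniq // => m1 m2; rewrite !mem_enum => k1 k2.
  by move/val_inj; apply: J_inj.
- by apply/allP => m; rewrite mem_enum => /J_re.
- move=> m1 m2 k1 k2 eqJ; apply: (uniq_map_inj_in js_uniq); rewrite ?mem_enum //.
  by rewrite eqJ.
- by move=> m k; apply: (J_re m); rewrite mem_enum.
Qed.

Lemma unstable_positive_feedbackE :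
  unstable_positive_feedback kap J <-> CS_triple kap J /\ minimal_unstable ks js.
Proof.
rewrite /unstable_positive_feedback.
have det_sub := det_psubmx_laplace size_cs_species size_cs_reactions CSmx_entry.
have -> : \det (CSmx kap J) = laplace_det stoich ks js.
  exact: det_laplace size_cs_species size_cs_reactions CSmx_entry.
have size_sub w : size w = size ks -> size (mask w ks) = count id w.
  by move=> size_w; rewrite size_mask.
rewrite /minimal_unstable /unstable_sign size_cs_species.
split=> [[cs kap_gt0 unst min] | [cs /and3P [kap_gt0 unst /allP min]]]; split=> //.
  apply/and3P; split=> //; apply/allP => w; rewrite mem_bitseqs => /eqP size_w.
  have [I <-] := set_maskP size_w.
  rewrite -det_sub size_sub ?size_set_mask ?size_cs_species // -card_set_mask.
  by apply/implyP => /min.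
move=> I; have := min (set_mask I); rewrite mem_bitseqs size_set_mask eqxx.
rewrite -det_sub size_sub ?size_set_mask ?size_cs_species // -card_set_mask.
by move=> /(_ isT) /implyP.
Qed.

End CSLists.

Definition reactions_of (m : nat) : seq nat := [seq j <- iota 0 nR | reactant j m].

Fixpoint cs_choices (ks : seq nat) : seq (seq nat) :=
  if ks is m :: ks' then [seq j :: js | j <- reactions_of m, js <- cs_choices ks']
  else [:: [::]].

Lemma cs_choices_complete ks js :
  all2 (fun m j => reactant j m) ks js -> js \in cs_choices ks.
Proof.
elim: ks js => [|m ks IH] [|j js] //= /andP [re_jm /IH js_in].
by apply: allpairs_f js_in; rewrite mem_filter mem_iota re_jm (reactant_lt re_jm).
Qed.

Definition cs12 : seq nat * seq nat := ([:: N1; Ds2; D2; T2], [:: R16; R28; R12; R29]).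
Definition cs21 : seq nat * seq nat := ([:: Ds1; D1; T1; N2], [:: R18; R22; R19; R26]).

Definition restrict (K ks js : seq nat) : seq nat * seq nat :=
  let w := [seq m \in K | m <- ks] in (mask w ks, mask w js).

Definition contains_properly (ks js : seq nat) (U : seq nat * seq nat) : bool :=
  (restrict U.1 ks js == U) && (size U.1 < size ks)%N.

Definition species_subsets : seq (seq nat) := [seq mask w (iota 0 nS) | w <- bitseqs nS].

Definition reduces_to_motif (ks js : seq nat) : bool :=
  [|| (ks, js) == cs12, (ks, js) == cs21,
      contains_properly ks js cs12 | contains_properly ks js cs21].

(* Rather than testing every principal minor of each unstable candidate, the
   enumeration only locates one of the two motifs, themselves unstable,
   properly inside it. *)
Lemma unstable_cs_reduces_to_motif :
  all (fun ks => all (fun js =>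
        if uniq js && (0 < size ks)%N then unstable_sign ks js ==> reduces_to_motif ks js
        else true) (cs_choices ks)) species_subsets.
Proof. by vm_compute. Qed.

Lemma contains_properly_not_minimal ks js U :
  minimal_unstable U.1 U.2 -> contains_properly ks js U -> ~~ minimal_unstable ks js.
Proof.
case: U => K L /and3P [/= K_gt0 unst _] /andP [/eqP [mask_ks mask_js] lt_K].
set w := [seq m \in K | m <- ks] in mask_ks mask_js.
have size_w : size w = size ks by rewrite size_map.
have count_w : count id w = size K by rewrite -mask_ks size_mask.
apply/negP => /and3P [_ _ /allP /(_ w)]; rewrite mem_bitseqs size_w eqxx.
by rewrite count_w K_gt0 lt_K mask_ks mask_js unst => /(_ isT).
Qed.

Lemma minimal_unstable_cs12 : minimal_unstable cs12.1 cs12.2.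
Proof. by vm_compute. Qed.

Lemma minimal_unstable_cs21 : minimal_unstable cs21.1 cs21.2.
Proof. by vm_compute. Qed.

Lemma minimal_unstable_cs ks js :
  ks \in species_subsets -> all2 (fun m j => reactant j m) ks js -> uniq js ->
  minimal_unstable ks js -> (ks, js) = cs12 \/ (ks, js) = cs21.
Proof.
move=> ks_in /cs_choices_complete js_in js_uniq min.
have /and3P [ks_gt0 unst _] := min.
move/allP/(_ ks ks_in)/allP/(_ js js_in): unstable_cs_reduces_to_motif.
rewrite js_uniq ks_gt0 unst /reduces_to_motif => /or4P [/eqP|/eqP|sub|sub]; auto.
- by case/negP: (contains_properly_not_minimal minimal_unstable_cs12 sub).
- by case/negP: (contains_properly_not_minimal minimal_unstable_cs21 sub).
Qed.

Lemma cs_species_in_subsets kap : cs_species kap \in species_subsets.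
Proof.
rewrite /cs_species enum_set_mask.
by apply: (map_f (mask^~ _)); rewrite mem_bitseqs size_set_mask.
Qed.

Lemma unstable_positive_feedback_cs kap J : unstable_positive_feedback kap J ->
  (cs_species kap, cs_reactions kap J) = cs12 \/ (cs_species kap, cs_reactions kap J) = cs21.
Proof.
case/unstable_positive_feedbackE => /CS_tripleE [js_uniq js_re] min.
exact: minimal_unstable_cs (cs_species_in_subsets kap) js_re js_uniq min.
Qed.

Lemma spset_perm l1 l2 : perm_eq l1 l2 -> spset l1 = spset l2.
Proof. by move/perm_mem => eq_l; apply/setP => m; rewrite !inE eq_l. Qed.

Lemma reset_perm l1 l2 : perm_eq l1 l2 -> reset l1 = reset l2.
Proof. by move/perm_mem => eq_l; apply/setP => j; rewrite !inE eq_l. Qed.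

Lemma motifE kap J : motif kap J = (spset (cs_species kap), reset (cs_reactions kap J)).
Proof.
congr pair; apply/setP => x; rewrite inE.
  by rewrite (mem_map val_inj) mem_enum.
apply/imsetP/mapP => [[m m_in ->] | [m m_in /val_inj ->]]; exists m => //.
- by rewrite mem_enum.
- by rewrite -mem_enum.
Qed.

Lemma motif_cs12 kap J :
  (cs_species kap, cs_reactions kap J) = cs12 -> motif kap J = motif12.
Proof. by rewrite motifE => -[-> ->]; congr pair; apply: reset_perm. Qed.

Lemma motif_cs21 kap J :
  (cs_species kap, cs_reactions kap J) = cs21 -> motif kap J = motif21.
Proof. by rewrite motifE => -[-> ->]; congr pair; [apply: spset_perm | apply: reset_perm]. Qed.

Definition cs_map (U : seq nat * seq nat) (m : 'I_nS) : 'I_nR :=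
  inord (nth 0%N U.2 (index (val m) U.1)).

Lemma cs_species_spset l : cs_species (spset l) = [seq m <- iota 0 nS | m \in l].
Proof.
rewrite /cs_species enum_set_mask /set_mask (eq_map (g := (mem l) \o val)) => [|m].
  by rewrite map_comp val_enum_ord -filter_mask.
by rewrite /= inE.
Qed.

Lemma cs_map_realizes U : U = cs12 \/ U = cs21 ->
  (cs_species (spset U.1), cs_reactions (spset U.1) (cs_map U)) = U.
Proof.
move=> U_cs; have ks_spset : cs_species (spset U.1) = U.1.
  by rewrite cs_species_spset; case: U_cs => ->.
rewrite ks_spset /cs_reactions.
rewrite (eq_map (g := (fun m => nth 0%N U.2 (index m U.1)) \o val)) => [|m].
  by rewrite map_comp -/(cs_species _) ks_spset; case: U_cs => ->.
rewrite /= inordK //; case: (ltnP (index (val m) U.1) (size U.2)) => [lt_i | le_i].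
  by apply: (allP (_ : all (fun j => j < nR)%N U.2)); [case: U_cs => -> | exact: mem_nth].
by rewrite nth_default.
Qed.

Lemma cs_map_feedback U : U = cs12 \/ U = cs21 ->
  unstable_positive_feedback (spset U.1) (cs_map U).
Proof.
move=> U_cs; apply/unstable_positive_feedbackE; rewrite CS_tripleE.
have := cs_map_realizes U_cs; case: U_cs => -> [-> ->].
  by rewrite minimal_unstable_cs12.
by rewrite minimal_unstable_cs21.
Qed.

Definition offdiag_nonneg (ks js : seq nat) : bool :=
  all (fun p => all (fun q => (p != q) ==> (0 <= stoich (nth 0%N ks p) (nth 0%N js q)))
    (iota 0 (size ks))) (iota 0 (size ks)).

Lemma Metzler_CSmx kap J :
  Metzler (CSmx kap J) -> offdiag_nonneg (cs_species kap) (cs_reactions kap J).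
Proof.
move=> MJ; apply/allP => p; rewrite mem_iota size_cs_species => /= lt_p.
apply/allP => q; rewrite mem_iota => /= lt_q; apply/implyP => neq_pq.
have neq : Ordinal lt_p != Ordinal lt_q by [].
by have := MJ _ _ neq; rewrite CSmx_entry.
Qed.

Lemma unstable_positive_feedback_not_Metzler kap J :
  unstable_positive_feedback kap J -> ~ Metzler (CSmx kap J).
Proof.
move=> /unstable_positive_feedback_cs cs_kap /Metzler_CSmx.
by case: cs_kap => -[-> ->].
Qed.

(** * Capacity for zero-eigenvalue bifurcation *)

Definition conservation_laws : seq (seq nat) :=
  [:: [:: NI1; N1; B2]; [:: NI2; N2; B1]; [:: Ds1; D1; T1; B1]; [:: Ds2; D2; T2; B2];
      [:: NE1; N1; T1; B1; NE2; N2; T2; B2]].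

Definition conserved (i m : nat) : int := (m \in nth [::] conservation_laws i)%:R.

Definition Cmx : 'M[int]_(5, nS) := \matrix_(i, m) conserved i m.

Lemma Cmx_conserved : Cmx *m Smx = 0.
Proof.
have balanced : all (fun i => all (fun j =>
    nsum nS (fun m => conserved i m * stoich m j) == 0) (iota 0 nR)) (iota 0 5).
  by vm_compute.
have CmxE i m : Cmx i m = conserved i m by rewrite mxE.
apply/matrixP => i j; rewrite (mulmx_nsum CmxE SmxE) mxE.
exact/eqP/(all_iota_ord (all_iota_ord balanced i)).
Qed.

Lemma n_cons_eq5 (R : realType) : n_cons R = 5%N.
Proof.
have CmxE i m : Cmx i m = conserved i m by rewrite mxE.
have rank_S : (9 <= \rank (S_R R))%N.
  apply: (@rank_ge_int_minor _ _ _ _ stoich [:: NE1; NI1; N1; Ds1; D1; T1; NE2; NI2; Ds2]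
    [:: R11; R12; R16; R18; R19; R21; R22; R26; R28] SmxE); by vm_compute.
have rank_C : (5 <= \rank (map_mx (fun z : int => z%:~R : R) Cmx))%N.
  apply: (@rank_ge_int_minor _ _ _ _ conserved (iota 0 5) [:: NI1; NI2; D1; D2; NE1] CmxE);
    by vm_compute.
have C_ker : (map_mx (fun z : int => z%:~R : R) Cmx <= kermx (S_R R))%MS.
  by rewrite sub_kermx -map_mxM Cmx_conserved map_mx0.
rewrite /n_cons; apply/eqP; rewrite eqn_leq (leq_trans rank_C (mxrankS C_ker)) andbT.
by rewrite mxrank_ker leq_subLR -[nS]/(9 + 5)%N leq_add2r.
Qed.

Definition unit_reactivity : 'M[int]_(nR, nS) := \matrix_(j, m) (is_reactant j m)%:R.

Definition jacobian_at_one (i m : nat) : int :=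
  nsum nR (fun j => stoich i j * (reactant j m)%:R).

(* A named constant, so that [vm_compute] evaluates the table only once. *)
Definition jacobian_table : seq (seq int) := table nS nS jacobian_at_one.

Lemma Gmx_one (R : realType) :
  Gmx (fun _ _ => 1 : R) = map_mx (fun z : int => z%:~R) (Smx *m unit_reactivity).
Proof.
rewrite /Gmx /S_R map_mxM; congr (_ *m _).
by apply/matrixP => j m; rewrite !mxE; case: is_reactant.
Qed.

Lemma pminor_sum9_at_one : pminor_sum 9 (Smx *m unit_reactivity) = 0.
Proof.
have size_iota14 : size (iota 0 nS) = nS by rewrite size_iota.
have reactivityE j m : unit_reactivity j m = (reactant j m)%:R by rewrite mxE.
pose jacobian i m := nth 0 (nth [::] jacobian_table i) m.
rewrite (@pminor_sum_laplace _ _ _ jacobian _ _ size_iota14 size_iota14) => [|i m].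
  by rewrite unlock; vm_compute.
rewrite (mulmx_nsum (g := fun j m => (reactant j m)%:R) SmxE reactivityE) !nth_iota //.
by rewrite /jacobian /jacobian_table !add0n nth_table.
Qed.

Lemma zero_eig_capacity_BIII (R : realType) : zero_eig_capacity R.
Proof.
exists (fun _ _ => 1); split => //.
by rewrite n_cons_eq5 Gmx_one pminor_sum_map pminor_sum9_at_one rmorph0.
Qed.

Theorem theorem3p3 :
  (* capacity for zero-eigenvalue bifurcation (differentiation) *)
  (forall R : realType, zero_eig_capacity R) /\
  (* every unstable-positive feedback has motif motif12 or motif21 *)
  (forall kap J, unstable_positive_feedback kap J ->
     motif kap J = motif12 \/ motif kap J = motif21) /\
  (* both motifs do arise from unstable-positive feedbacks *)
  (exists kap J, unstable_positive_feedback kap J /\ motif kap J = motif12) /\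
  (exists kap J, unstable_positive_feedback kap J /\ motif kap J = motif21) /\
  (* the motif is non-autocatalytic: no unstable-positive feedback is Metzler *)
  (forall kap J, unstable_positive_feedback kap J -> ~ Metzler (CSmx kap J)) /\
  (* the network (BIII) is non-autocatalytic *)
  non_autocatalytic_network.
Proof.
have cs12_or : cs12 = cs12 \/ cs12 = cs21 by left.
have cs21_or : cs21 = cs12 \/ cs21 = cs21 by right.
split; first exact: zero_eig_capacity_BIII.
split.
  move=> kap J /unstable_positive_feedback_cs [/motif_cs12 | /motif_cs21]; auto.
split.
  exists (spset cs12.1), (cs_map cs12); split; first exact: cs_map_feedback cs12_or.
  exact: motif_cs12 (cs_map_realizes cs12_or).
split.
  exists (spset cs21.1), (cs_map cs21); split; first exact: cs_map_feedback cs21_or.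
  exact: motif_cs21 (cs_map_realizes cs21_or).
split; first exact: unstable_positive_feedback_not_Metzler.
by case=> kap [J [/unstable_positive_feedback_not_Metzler]].
Qed.
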